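(* Let $\Gamma$ be a closed web. Then $R(\Gamma)$ is nonempty, and for every edge $e$ of $\Gamma$ and every $L\in\mathbb{C}P(2)$ there is $\rho\in R(\Gamma)$ with $\rho(e)=L$.
   Context: A web is an oriented graph embedded in $S^2$ (circle components allowed) each of whose vertices is trivalent and is a source or a sink. $R(\Gamma)$ is the set of maps $\rho$ from the edges of $\Gamma$ to $\mathbb{C}P(2)$ (complex lines in $\mathbb{C}^3$) such that the three lines at every vertex are mutually Hermitian orthogonal. *)

From HB Require Import structures.
From mathcomp Require Import all_boot all_order all_algebra all_fingroup.
From mathcomp Require Import Rstruct.
From mathcomp.real_closed Require Import complex.
Set Implicit Arguments. Unset Strict Implicit. Unset Printing Implicit Defensive.
Import Order.TTheory GRing.Theory Num.Theory.
Local Open Scope ring_scope.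

Definition C : Type := (Rdefinitions.R)[i].

Definition hdot (u v : 'rV[C]_3) : C := \sum_(i < 3) u 0 i * (v 0 i)^*.

Definition CP2 := {U : {vspace 'rV[C]_3} | \dim U == 1%N}.

Definition horth (L M : CP2) : Prop :=
  forall u v : 'rV[C]_3, u \in val L -> v \in val M -> hdot u v = 0.

(** A (combinatorial) web, as an oriented combinatorial map:
    - [dart]  : half-edges, each attached to a vertex;
    - [circ]  : circle components (edges without vertices);
    - [vrot]  : rotation system: the cyclic order of half-edges around each
                vertex (vertices = orbits of [vrot]);
    - [einv]  : the involution pairing the two half-edges of an edge;
    - [out d] : true iff the edge of [d] is oriented away from the vertex of [d]. *)
Record web := Web {
  dart : finType;
  circ : finType;
  vrot : {perm dart};
  einv : {perm dart};
  out  : dart -> bool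
}.
Arguments vrot : clear implicits.
Arguments einv : clear implicits.
Arguments out : clear implicits.

Section WebDefs.
Variable W : web.

Definition wadj : rel (dart W) := fun x y => (y == vrot W x) || (y == einv W x).

Definition wcomp (d : dart W) : {set dart W} := [set y | connect wadj d y].

Definition nverts (K : {set dart W}) : nat :=
  #|[set O in porbits (vrot W) | O \subset K]|.
Definition nedges (K : {set dart W}) : nat := #|K| %/ 2.
Definition nfaces (K : {set dart W}) : nat :=
  #|[set O in porbits (vrot W * einv W)%g | O \subset K]|.

(** A closed web (no boundary) embedded in S^2:
    every vertex trivalent, every half-edge paired with another (no free ends),
    orientations consistent along edges, every vertex a source or a sink,
    and every connected component is a genus-0 map (Euler: V - E + F = 2),
    i.e. the rotation system is an embedding in the sphere. *)
Definition closed_web : Prop :=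
  [/\ forall d : dart W, #|porbit (vrot W) d| = 3%N,
      forall d : dart W, einv W (einv W d) = d /\ einv W d != d,
      forall d : dart W, out W (einv W d) = ~~ out W d,
      forall d : dart W, out W (vrot W d) = out W d &
      forall d : dart W,
        (nverts (wcomp d) + nfaces (wcomp d) = nedges (wcomp d) + 2)%N].

(** Edges: an edge through a half-edge [d] (the edge {d, einv d}), or a circle. *)
Definition edge := (dart W + circ W)%type.

(** A candidate map from edges to CP(2): a line for each half-edge (required
    to agree on the two halves of an edge) and one for each circle. *)
Definition coloring := ((dart W -> CP2) * (circ W -> CP2))%type.

Definition color (rho : coloring) (e : edge) : CP2 :=
  match e with inl d => rho.1 d | inr c => rho.2 c end.

Definition inR (rho : coloring) : Prop :=
  (forall d : dart W, rho.1 (einv W d) = rho.1 d) /\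
  (forall d d' : dart W, d' \in porbit (vrot W) d -> d' != d ->
     horth (rho.1 d) (rho.1 d')).

End WebDefs.

From HB Require Import structures.
From mathcomp Require Import all_boot all_order all_algebra all_fingroup.
From mathcomp Require Import Rstruct.
From mathcomp.real_closed Require Import complex.
From mathcomp Require Import ring.
Set Implicit Arguments. Unset Strict Implicit. Unset Printing Implicit Defensive.
Import Order.TTheory GRing.Theory Num.Theory.

(* The three lines of a Hermitian orthonormal frame, assigned to the edges
   along a proper 3-edge-coloring, give an element of R(Gamma); choosing the
   frame through L at the color of e gives rho(e) = L.  A closed web is a
   cubic graph which is bipartite (sources versus sinks), so such a coloring
   exists by Koenig's edge-coloring theorem, proved with Kempe chains: an
   uncolored edge d, with color a missing at d and b missing at its other end,
   can be colored a after swapping a and b along the a/b-alternating path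
   leaving the other end, because by bipartiteness this path cannot end at d. *)

Lemma connect_ind (T : finType) (e : rel T) (x : T) (P : T -> Prop) :
  P x -> (forall y z, connect e x y -> e y z -> P y -> P z) ->
  forall y, connect e x y -> P y.
Proof.
move=> Px Pe y /connectP[p]; elim/last_ind: p y => [|p z IHp] y /=; first by move=> _ ->.
rewrite rcons_path last_rcons => /andP[xp pz] ->.
by apply: Pe (IHp _ xp erefl); first by apply/connectP; exists p.
Qed.

Section BipartiteEdgeColoring.

Variables (T : finType) (V : eqType) (vtx : T -> V) (mate : T -> T).
Variables (side : T -> bool) (k : nat).
Hypothesis mateK : involutive mate.
Hypothesis side_mate : forall x, side (mate x) = ~~ side x.
Hypothesis side_vtx : forall x y, vtx x = vtx y -> side x = side y.
Hypothesis degree_le : forall x, #|[set y | vtx y == vtx x]| <= k.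

Lemma vtx_mate_neq x : vtx (mate x) != vtx x.
Proof. by apply/eqP=> /side_vtx; rewrite side_mate; case: (side x). Qed.

Definition proper_partial (c : T -> option 'I_k) : Prop :=
  (forall x, c (mate x) = c x) /\
  (forall x y, vtx y = vtx x -> y != x -> c x != None -> c y != c x).

Definition missing (c : T -> option 'I_k) (x : T) (a : 'I_k) : Prop :=
  forall y, vtx y = vtx x -> c y != Some a.

Lemma exists_missing c x : c x = None -> exists a, missing c x a.
Proof.
move=> cx; pose A := [set y | vtx y == vtx x].
have /subsetPn[o _ o_unused] : ~~ (predT \subset c @: A).
  rewrite (contra (@subset_leq_card _ _ _)) // -ltnNge card_option card_ord ltnS.
  exact: leq_trans (leq_imset_card c A) (degree_le x).
case: o o_unused => [a|]; last by rewrite -cx imset_f ?inE.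
move=> a_unused; exists a => y yx.
by apply: contraNneq a_unused => <-; rewrite imset_f ?inE ?yx.
Qed.

Section Kempe.

Variables (c : T -> option 'I_k) (d x0 : T) (a b : 'I_k).
Hypothesis c_proper : proper_partial c.
Hypothesis missing_d : missing c d a.
Hypothesis missing_mate_d : missing c (mate d) b.
Hypothesis vtx_x0 : vtx x0 = vtx (mate d).
Hypothesis c_x0 : c x0 = Some a.

Let c_mate : forall x, c (mate x) = c x := c_proper.1.
Let c_vtx : forall x y, vtx y = vtx x -> y != x -> c x != None -> c y != c x :=
  c_proper.2.

Lemma a_neq_b : a != b.
Proof. by apply: contraNneq (missing_mate_d vtx_x0) => <-; rewrite c_x0. Qed.

Definition ab_colored (z : T) : bool := (c z == Some a) || (c z == Some b).

Definition kempe_step : rel T := fun x y =>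
  [&& ab_colored x, ab_colored y, vtx y == vtx (mate x) & y != mate x].

(* The darts of the a/b-alternating path that leaves the vertex of mate d
   through x0, together with their mates. *)
Definition kempe_chain (y : T) : bool :=
  connect kempe_step x0 y || connect kempe_step x0 (mate y).

Definition kempe_swap (y : T) : option 'I_k :=
  if kempe_chain y then omap (tperm a b) (c y) else c y.

Lemma ab_colored_neq_None z : ab_colored z -> c z != None.
Proof. by case/orP=> /eqP->. Qed.

Lemma ab_colored_mate z : ab_colored (mate z) = ab_colored z.
Proof. by rewrite /ab_colored c_mate. Qed.

Lemma ab_colored_other x y : ab_colored x -> ab_colored y -> c y != c x ->
  (c y == Some a) = (c x != Some a).
Proof.
have ba : b != a by rewrite eq_sym a_neq_b.
rewrite /ab_colored => /orP[]/eqP-> /orP[]/eqP->;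
by rewrite ?eqxx ?(inj_eq Some_inj) ?(negbTE ba).
Qed.

Lemma ab_colored_vtx_uniq p q r : vtx q = vtx p -> vtx r = vtx p -> q != p -> r != p ->
  ab_colored p -> ab_colored q -> ab_colored r -> q = r.
Proof.
move=> qp rp nqp nrp abp abq abr.
have cq_a := ab_colored_other abp abq (c_vtx qp nqp (ab_colored_neq_None abp)).
have cr_a := ab_colored_other abp abr (c_vtx rp nrp (ab_colored_neq_None abp)).
have cqr : c q = c r.
  move: abq abr cq_a; rewrite -cr_a /ab_colored => /orP[]/eqP-> /orP[]/eqP->;
  by rewrite ?(inj_eq Some_inj) ?(eq_sym b a) ?(negbTE a_neq_b) ?eqxx.
apply/eqP; apply: contraTT (eqxx (c q)) => nqr.
by rewrite {2}cqr c_vtx // ?qp ?rp // -cqr ab_colored_neq_None.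
Qed.

Lemma kempe_reach_parity y : connect kempe_step x0 y ->
  (c y == Some a) = (side y == side x0).
Proof.
elim/connect_ind => [|w z _ /and4P[abw abz /eqP zw nzw] IH]; first by rewrite c_x0 !eqxx.
rewrite -ab_colored_mate in abw.
have := c_vtx zw nzw (ab_colored_neq_None abw).
move/(ab_colored_other abw abz) => ->; rewrite c_mate IH (side_vtx zw) side_mate.
by case: (side w); case: (side x0).
Qed.

Lemma kempe_reach_ab_colored y : connect kempe_step x0 y -> ab_colored y.
Proof.
by elim/connect_ind => [|w z _ /and4P[]//]; rewrite /ab_colored c_x0 eqxx.
Qed.

Lemma kempe_chain_ab y : kempe_chain y -> ab_colored y.
Proof. by case/orP=> /kempe_reach_ab_colored; rewrite ?ab_colored_mate. Qed.

Lemma kempe_chain_mate y : kempe_chain (mate y) = kempe_chain y.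
Proof. by rewrite /kempe_chain mateK orbC. Qed.

Lemma kempe_chain_vtx y z : kempe_chain y -> vtx z = vtx y -> z != y ->
  ab_colored z -> kempe_chain z.
Proof.
case/orP=> [reach_y|reach_my] zy nzy abz; last first.
  have ab_my := kempe_reach_ab_colored reach_my.
  apply/orP; left; apply: connect_trans reach_my (connect1 _).
  by rewrite /kempe_step ab_my abz mateK zy eqxx nzy.
move: z zy nzy abz; elim/connect_ind: y / reach_y.
  move=> z zx0 nzx0; rewrite /ab_colored => /orP[]/eqP cz.
    by have := c_vtx zx0 nzx0; rewrite cz c_x0 eqxx => /(_ isT).
  by have := missing_mate_d (etrans zx0 vtx_x0); rewrite cz eqxx.
move=> w y reach_w /and4P[abw aby /eqP yw nyw] _ z zy nzy abz.
have -> : z = mate w.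
  apply: ab_colored_vtx_uniq zy (esym yw) nzy _ aby abz _.
    by rewrite eq_sym.
  by rewrite ab_colored_mate.
by rewrite /kempe_chain mateK reach_w orbT.
Qed.

Lemma kempe_chain_vtx_d y : vtx y = vtx d -> kempe_chain y -> c y != Some b.
Proof.
have side_x0 : side x0 = ~~ side d by rewrite (side_vtx vtx_x0) side_mate.
move=> yd /orP[reach_y|reach_my]; last first.
  (* mate y would lie on the side of x0, hence be colored a *)
  have := kempe_reach_parity reach_my; rewrite c_mate side_mate (side_vtx yd) side_x0 eqxx.
  by move/eqP->; rewrite (inj_eq Some_inj) a_neq_b.
move: yd; elim/connect_ind: y / reach_y => [|w y _ /and4P[abw aby /eqP yw nyw] _] yd.
  by rewrite c_x0 (inj_eq Some_inj) a_neq_b.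
apply/eqP=> cy; rewrite -ab_colored_mate in abw.
have := ab_colored_other abw aby (c_vtx yw nyw (ab_colored_neq_None abw)).
rewrite cy (inj_eq Some_inj) eq_sym (negbTE a_neq_b) => /esym/negbFE/eqP cmw.
by have := missing_d (etrans (esym yw) yd); rewrite cmw eqxx.
Qed.

Lemma swap_ab_colored x : ab_colored x ->
  (omap (tperm a b) (c x) == Some a) || (omap (tperm a b) (c x) == Some b).
Proof. by case/orP=> /eqP->; rewrite /= ?tpermL ?tpermR eqxx ?orbT. Qed.

Lemma kempe_swap_proper : proper_partial kempe_swap.
Proof.
split=> [x|x y yx nyx]; first by rewrite /kempe_swap kempe_chain_mate c_mate.
rewrite /kempe_swap; case: ifP => chx; case: ifP => chy cx_None.
- rewrite (inj_eq (inj_omap (@perm_inj _ _))) c_vtx //.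
  by case: (c x) cx_None.
- have nab_y : ~~ ab_colored y := contraFN (kempe_chain_vtx chx yx nyx) chy.
  apply: contraNneq nab_y; rewrite /ab_colored => ->.
  exact: swap_ab_colored (kempe_chain_ab chx).
- have nxy : x != y by rewrite eq_sym.
  have nab_x : ~~ ab_colored x := contraFN (kempe_chain_vtx chy (esym yx) nxy) chx.
  rewrite eq_sym; apply: contraNneq nab_x; rewrite /ab_colored => ->.
  exact: swap_ab_colored (kempe_chain_ab chy).
- exact: c_vtx.
Qed.

Lemma kempe_swap_None y : (kempe_swap y == None) = (c y == None).
Proof. by rewrite /kempe_swap; case: ifP; case: (c y). Qed.

Lemma kempe_swap_missing_d : missing kempe_swap d a.
Proof.
move=> y yd; rewrite /kempe_swap; case: ifP => [chy|_]; last exact: missing_d.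
have := kempe_chain_vtx_d yd chy; have := missing_d yd.
by case: (c y) => //= i; rewrite !(inj_eq Some_inj) (canF_eq (tpermK a b)) tpermL.
Qed.

Lemma kempe_swap_missing_mate_d : missing kempe_swap (mate d) a.
Proof.
move=> y yd; rewrite /kempe_swap; case: ifP => [chy|nchy].
  have := kempe_chain_ab chy; rewrite /ab_colored => /orP[]/eqP cy.
    by rewrite cy /= tpermL (inj_eq Some_inj) eq_sym a_neq_b.
  by have := missing_mate_d yd; rewrite cy eqxx.
apply: contraFneq nchy => cy.
have -> : y = x0.
  apply/eqP; apply: contraTT (eqxx (c y)) => nyx0.
  have cx0_None : c x0 != None by rewrite c_x0.
  by rewrite {2}cy -c_x0 c_vtx // yd vtx_x0.
by rewrite /kempe_chain connect0.
Qed.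
End Kempe.

Lemma proper_fill c d a : proper_partial c -> missing c d a -> missing c (mate d) a ->
  proper_partial (fun x => if (x == d) || (x == mate d) then Some a else c x).
Proof.
move=> [c_mate c_vtx] miss_d miss_md; split=> [x|x y yx nyx].
  rewrite (canF_eq mateK) (inj_eq (can_inj mateK)) orbC.
  by case: ifP => // _; apply: c_mate.
have vtx_md := vtx_mate_neq d.
case: ifP => [xd|_]; case: ifP => [yd|_] cx_None.
- case/orP: xd yd yx nyx => /eqP-> /orP[]/eqP->; rewrite ?eqxx // => /eqP.
    by rewrite (negbTE vtx_md).
  by rewrite eq_sym (negbTE vtx_md).
- by case/orP: xd yx => /eqP-> yx; [apply: miss_d | apply: miss_md].
- by rewrite eq_sym; case/orP: yd yx => /eqP-> /esym xy; [apply: miss_d | apply: miss_md].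
- exact: c_vtx.
Qed.

Lemma proper_extend c d : proper_partial c -> c d = None ->
  exists c', [/\ proper_partial c', c' d != None & forall x, c' x = None -> c x = None].
Proof.
move=> c_pr cd; have [a miss_d] := exists_missing cd.
have [b miss_md] : exists b, missing c (mate d) b by apply: exists_missing; rewrite c_pr.1.
suff [c1 [c1_pr miss1_d miss1_md c1_None]] : exists c1, [/\ proper_partial c1,
    missing c1 d a, missing c1 (mate d) a & forall x, c1 x = None -> c x = None].
  exists (fun x => if (x == d) || (x == mate d) then Some a else c1 x); split.
  - exact: proper_fill.
  - by rewrite eqxx.
  - by move=> x; case: ifP => // _ /c1_None.
case: (pickP [pred x0 | (vtx x0 == vtx (mate d)) && (c x0 == Some a)]) => [x0 | none].
  case/andP=> /eqP vtx_x0 /eqP c_x0; exists (kempe_swap c x0 a b); split.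
  - exact: kempe_swap_proper c_pr miss_md vtx_x0 c_x0.
  - exact: kempe_swap_missing_d c_pr miss_d miss_md vtx_x0 c_x0.
  - exact: kempe_swap_missing_mate_d c_pr miss_md vtx_x0 c_x0.
  - by move=> x /eqP; rewrite kempe_swap_None => /eqP.
exists c; split=> // y yd.
by have := none y; rewrite /= yd eqxx /= => ->.
Qed.

Lemma exists_total_proper : exists c, proper_partial c /\ forall x, c x != None.
Proof.
pose uncolored (c : T -> option 'I_k) := [set x | c x == None].
suff : forall n c, #|uncolored c| < n -> proper_partial c ->
    exists c', proper_partial c' /\ forall x, c' x != None.
  by move/(_ _ (fun=> None)); apply=> //; split=> // x y _ _; rewrite eqxx.
elim=> // n IHn c ltn c_pr.
case: (pickP [pred x | c x == None]) => [d /eqP cd | total]; last first.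
  by exists c; split=> // x; have := total x => /= ->.
have [c' [c'_pr c'd c'_None]] := proper_extend c_pr cd.
apply: IHn c'_pr; rewrite -ltnS; apply: leq_trans ltn; rewrite ltnS.
apply: proper_card; apply/properP; split.
  by apply/subsetP=> x; rewrite !inE => /eqP/c'_None->.
by exists d; rewrite !inE ?cd // (negbTE c'd).
Qed.

Lemma degree_gt0 (x : T) : 0 < k.
Proof.
by apply: leq_trans (degree_le x); rewrite card_gt0; apply/set0Pn; exists x; rewrite inE.
Qed.

Theorem bipartite_edge_coloring : exists f : T -> 'I_k,
  (forall x, f (mate x) = f x) /\ (forall x y, vtx y = vtx x -> y != x -> f y != f x).
Proof.
have [c [[c_mate c_vtx] total]] := exists_total_proper.
exists (fun x => odflt (Ordinal (degree_gt0 x)) (c x)); split=> [x|x y yx nyx] /=.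
  by rewrite c_mate; move: (total x); case: (c x).
move: (c_vtx x y yx nyx (total x)) (total x) (total y).
by case: (c x) => [i|] //; case: (c y) => [j|] //= _ _; rewrite (inj_eq Some_inj).
Qed.

End BipartiteEdgeColoring.

Local Open Scope ring_scope.

Definition vec3 (p q r : C) : 'rV[C]_3 := \row_(j < 3) [:: p; q; r]`_j.

Lemma vec3E (v : 'rV[C]_3) : v = vec3 (v 0 0) (v 0 1) (v 0 2%:R).
Proof.
by apply/rowP=> -[[|[|[|j]]] lt_j3] //=; rewrite !mxE; congr (v _ _); apply/val_inj.
Qed.

Lemma hdot_vec3 p q r p' q' r' :
  hdot (vec3 p q r) (vec3 p' q' r') = p * p'^* + q * q'^* + r * r'^*.
Proof. by rewrite /hdot !big_ord_recl big_ord0 !mxE addr0 addrA. Qed.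

Lemma vec3_eq0 p q r : (vec3 p q r == 0) = [&& p == 0, q == 0 & r == 0].
Proof.
apply/eqP/and3P=> [v0|[/eqP-> /eqP-> /eqP->]].
  by move/rowP: v0 => v0; move: (v0 0) (v0 1) (v0 2%:R); rewrite !mxE /= => -> -> ->.
by apply/rowP=> -[[|[|[|j]]] lt_j3]; rewrite !mxE.
Qed.

Lemma hdotZ u v (s t : C) : hdot (s *: u) (t *: v) = s * t^* * hdot u v.
Proof.
rewrite /hdot mulr_sumr; apply: eq_bigr => i _.
by rewrite !mxE rmorphM mulrACA.
Qed.

Lemma hdot_conj u v : hdot v u = (hdot u v)^*.
Proof.
rewrite /hdot rmorph_sum; apply: eq_bigr => i _.
by rewrite rmorphM /= conjCK mulrC.
Qed.

Lemma orthogonal_triple (v : 'rV[C]_3) : v != 0 -> exists u w,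
  [/\ u != 0, w != 0, hdot v u = 0, hdot v w = 0 & hdot u w = 0].
Proof.
rewrite [v]vec3E; move: (v 0 0) (v 0 1) (v 0 2%:R) => p q r.
have [/andP[/eqP p0 /eqP q0] _|pq _] := boolP ((p == 0) && (q == 0)).
  exists (vec3 1 0 0), (vec3 0 1 0).
  by rewrite !vec3_eq0 !hdot_vec3 p0 q0 !eqxx oner_eq0 !conjC0 !conjC1; split=> //; ring.
have pq_norm : p * p^* + q * q^* != 0.
  rewrite -!normCK paddr_eq0 ?exprn_ge0 // !expf_eq0 /= !normr_eq0.
  exact: pq.
(* w is the conjugate of the cross product of v and u *)
exists (vec3 (- q^*) p^* 0), (vec3 (- (r^* * p)) (- (r^* * q)) (p * p^* + q * q^*)).
rewrite !vec3_eq0 !hdot_vec3 oppr_eq0 !conjC_eq0 eqxx andbT andbC pq.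
rewrite (negbTE pq_norm) !andbF.
by rewrite ?(rmorphN, rmorphD, rmorphM, rmorph0) /= ?conjCK; split=> //; ring.
Qed.

Lemma dim_vline_eq1 (K : fieldType) (vT : vectType K) (u : vT) :
  u != 0 -> \dim <[u]> == 1%N.
Proof. by rewrite dim_vline => ->. Qed.

Definition line_of (u : 'rV[C]_3) (nu : u != 0) : CP2 :=
  exist _ <[u]>%VS (dim_vline_eq1 nu).

Lemma CP2_spanned (L : CP2) : exists2 u, u != 0 & val L = <[u]>%VS.
Proof.
case: L => U /= dimU; have nU : vpick U != 0.
  by rewrite vpick0; apply: contraTneq dimU => ->; rewrite dimv0.
exists (vpick U) => //; apply/eqP; rewrite eq_sym eqEdim dim_vline nU (eqP dimU).
by rewrite -memvE memv_pick.
Qed.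

Lemma horth_of_hdot (L M : CP2) u v :
  val L = <[u]>%VS -> val M = <[v]>%VS -> hdot u v = 0 -> horth L M.
Proof.
move=> Lu Mv uv x y; rewrite Lu Mv => /vlineP[s ->] /vlineP[t ->].
by rewrite hdotZ uv mulr0.
Qed.

Lemma orthogonal_frame (L : CP2) (i : 'I_3) : exists F : 'I_3 -> CP2,
  F i = L /\ (forall j l, j != l -> horth (F j) (F l)).
Proof.
have [v nv Lv] := CP2_spanned L.
have [u [w [nu nw vu vw uw]]] := orthogonal_triple nv.
have hdot_sym x y : hdot x y = 0 -> hdot y x = 0.
  by move=> xy; rewrite hdot_conj xy conjC0.
pose F (j : 'I_3) := match val j with 0 => L | 1 => line_of nu | _ => line_of nw end.
have FV (j : 'I_3) : val (F j) = <[[:: v; u; w]`_j]>%VS.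
  by case: j => [[|[|[|j]]] ?].
exists (F \o tperm i 0); split=> [|j l]; first by rewrite /= tpermL.
rewrite -(inj_eq (@perm_inj _ (tperm i 0))) /=.
move: (tperm i 0 j) (tperm i 0 l); clear i j l => j l njl.
apply: horth_of_hdot (FV j) (FV l) _.
by case: j l njl => [[|[|[|j]]] ?] [[|[|[|l]]] ?] //= _; apply: hdot_sym.
Qed.

Lemma out_porbit (W : web) : (forall d, out W (vrot W d) = out W d) ->
  forall d d', d' \in porbit (vrot W) d -> out W d' = out W d.
Proof.
move=> out_vrot d _ /porbitP[i ->]; rewrite permX.
by elim: i => //= i IHi; rewrite out_vrot.
Qed.

Lemma web_edge_coloring (W : web) : closed_web W -> exists f : dart W -> 'I_3,
  (forall d, f (einv W d) = f d) /\
  (forall d d', d' \in porbit (vrot W) d -> d' != d -> f d' != f d).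
Proof.
case=> rot3 einvK out_einv out_vrot _.
have [|//|d d' /eqP|d|f [f_einv f_vtx]] :=
  bipartite_edge_coloring (vtx := porbit (vrot W)) (mate := einv W)
    (side := out W) (k := 3).
- by move=> d; case: (einvK d).
- by rewrite eq_porbit_mem => /out_porbit->.
- have -> : [set d' | porbit (vrot W) d' == porbit (vrot W) d] = porbit (vrot W) d.
    by apply/setP=> d'; rewrite inE eq_porbit_mem.
  by rewrite rot3.
by exists f; split=> // d d' dd'; apply: f_vtx; apply/eqP; rewrite eq_porbit_mem.
Qed.

Lemma inR_frame (W : web) (f : dart W -> 'I_3) (F : 'I_3 -> CP2) (g : circ W -> CP2) :
  (forall d, f (einv W d) = f d) ->
  (forall d d', d' \in porbit (vrot W) d -> d' != d -> f d' != f d) ->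
  (forall i j, i != j -> horth (F i) (F j)) ->
  inR ((F \o f, g) : coloring W).
Proof.
move=> f_einv f_vtx F_orth; split=> [d|d d' dd' nd] /=; first by rewrite f_einv.
by apply: F_orth; rewrite eq_sym f_vtx.
Qed.

Theorem mainTheorem13 (W : web) (HW : closed_web W) :
  (exists rho : coloring W, inR rho) /\
  (forall (e : edge W) (L : CP2),
     exists rho : coloring W, inR rho /\ color rho e = L).
Proof.
have [f [f_einv f_vtx]] := web_edge_coloring HW.
have frame_through (i : 'I_3) (L : CP2) :
    exists2 F : 'I_3 -> CP2, F i = L & inR ((F \o f, fun=> L) : coloring W).
  have [F [FiL F_orth]] := orthogonal_frame L i.
  by exists F => //; apply: inR_frame.
split.
  have e1_neq0 : vec3 1 0 0 != 0 by rewrite vec3_eq0 oner_eq0.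
  have [F _ rhoR] := frame_through 0 (line_of e1_neq0).
  by exists (F \o f, fun=> line_of e1_neq0).
case=> [d|c] L.
  have [F FL rhoR] := frame_through (f d) L.
  by exists (F \o f, fun=> L).
have [F _ rhoR] := frame_through 0 L.
by exists (F \o f, fun=> L).
Qed.
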